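(* Let $a\in\mathbb R$ and define $\Gamma_p$ and $A_{p,q}$ as in the context. Then, as meromorphic functions of $s$: (i) for all $m,n\in\mathbb Z$, $A_{m,n}(s)=A_{m,0}(s)+A_{0,n}(s)$; (ii) for all $m\in\mathbb Z$, $A_{m,0}(s)=A_{0,-m}(s+m)$; (iii) for all $\ell,m,n\in\mathbb Z$, $$\begin{aligned}&A_{m+\ell,n+\ell}(s)A_{\ell,0}(s)-A_{m,n}(s)A_{m+n,0}(s)+A_{n+m,\ell+m}(s)A_{m,0}(s)-A_{n,\ell}(s)A_{n+\ell,0}(s)\\&+A_{\ell+n,m+n}(s)A_{n,0}(s)-A_{\ell,m}(s)A_{\ell+m,0}(s)\\&+\Gamma_0(s)\big(A_{m,n}(s)-A_{m+\ell,n+\ell}(s)+A_{n,\ell}(s)-A_{n+m,\ell+m}(s)+A_{\ell,m}(s)-A_{\ell+n,m+n}(s)\big)=0.\end{aligned}$$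
   Context: Fix $a\in\mathbb R$. For $p\in\mathbb Z$ define the meromorphic functions of $s\in\mathbb C$ $$\Gamma_p(s)=\frac{\Gamma(a(s+p)+1)}{\Gamma(a(s+p-1)+1)},\qquad A_{p,q}(s)=\Gamma_p(s)-\Gamma_q(s),$$ where $\Gamma$ is Euler's gamma function. *)

From Stdlib Require Import Reals.
From Coquelicot Require Import Coquelicot.
Open Scope R_scope.

Definition cpow_nat (n : nat) (z : C) : C :=
  Cmult (RtoC (exp (Re z * ln (INR n))))
        (cos (Im z * ln (INR n)), sin (Im z * ln (INR n))).

Fixpoint rising (z : C) (n : nat) : C :=
  match n with
  | O => z
  | S k => Cmult (rising z k) (Cplus z (RtoC (INR (S k))))
  end.

Definition gauss_term (z : C) (n : nat) : C :=
  Cdiv (Cmult (RtoC (INR (Factorial.fact n))) (cpow_nat n z)) (rising z n).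

(* Euler's Gamma function on C, via Gauss's limit formula
   Gamma(z) = lim_{n -> oo} n! n^z / (z (z+1) ... (z+n)),
   valid for z not in {0,-1,-2,...}; at the poles the value is an
   unspecified complex number (total function). *)
Definition CGamma (z : C) : C :=
  lim (T := C_CompleteNormedModule) (filtermap (gauss_term z) eventually).

Definition Gam (a : R) (p : Z) (s : C) : C :=
  Cdiv (CGamma (Cplus (Cmult (RtoC a) (Cplus s (RtoC (IZR p)))) (RtoC 1)))
       (CGamma (Cplus (Cmult (RtoC a) (Cplus s (RtoC (IZR (p - 1))))) (RtoC 1))).

Definition Aq (a : R) (p q : Z) (s : C) : C := Cminus (Gam a p s) (Gam a q s).

From Stdlib Require Import Reals ZArith.
From Coquelicot Require Import Coquelicot.

(* Parts (i) and (iii) hold for the differences A_{p,q} = g p - g q of an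
   arbitrary g : Z -> C; they are polynomial identities in the values g p once
   indices such as m + n and n + m are identified.  Only (ii) uses the shape of
   Gamma_p, through the translation rule Gamma_p(s + k) = Gamma_{p+k}(s).  All
   identities are pointwise, so the unspecified values of CGamma at its poles
   play no role. *)

Definition increment (g : Z -> C) (p q : Z) : C := (g p - g q)%C.

Section Hexagon.

Variable g : Z -> C.
Let A := increment g.

Lemma increment_cocycle (p q r : Z) : A p r = (A p q + A q r)%C.
Proof. unfold A, increment; ring. Qed.

Lemma increment_hexagon (l m n : Z) :
  (A (m + l) (n + l) * A l 0 - A m n * A (m + n) 0
   + A (n + m) (l + m) * A m 0 - A n l * A (n + l) 0
   + A (l + n) (m + n) * A n 0 - A l m * A (l + m) 0
   + g 0%Z * (A m n - A (m + l) (n + l) + A n l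
              - A (n + m) (l + m) + A l m - A (l + n) (m + n)) = 0)%C.
Proof.
  unfold A, increment.
  rewrite (Z.add_comm n m), (Z.add_comm l m), (Z.add_comm l n).
  ring.
Qed.

End Hexagon.

Lemma Cplus_IZR_assoc (s : C) (p q : Z) :
  (s + RtoC (IZR p) + RtoC (IZR q))%C = (s + RtoC (IZR (p + q)))%C.
Proof.
  rewrite plus_IZR.
  apply injective_projections; simpl; ring.
Qed.

Lemma Gam_shift (a : R) (p k : Z) (s : C) :
  Gam a p (s + RtoC (IZR k))%C = Gam a (p + k) s.
Proof.
  unfold Gam.
  rewrite !Cplus_IZR_assoc.
  replace (k + (p - 1))%Z with (p + k - 1)%Z by ring.
  rewrite (Z.add_comm k p).
  reflexivity.
Qed.

Lemma Aq_shift (a : R) (p q k : Z) (s : C) :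
  Aq a p q (s + RtoC (IZR k))%C = Aq a (p + k) (q + k) s.
Proof. unfold Aq; rewrite !Gam_shift; reflexivity. Qed.

Theorem mainTheorem2 (a : R) :
  (forall (m n : Z) (s : C), Aq a m n s = Aq a m 0 s + Aq a 0 n s)%C /\
  (forall (m : Z) (s : C), Aq a m 0 s = Aq a 0 (- m) (s + RtoC (IZR m)))%C /\
  (forall (l m n : Z) (s : C),
     (Aq a (m + l) (n + l) s * Aq a l 0 s - Aq a m n s * Aq a (m + n) 0 s
      + Aq a (n + m) (l + m) s * Aq a m 0 s - Aq a n l s * Aq a (n + l) 0 s
      + Aq a (l + n) (m + n) s * Aq a n 0 s - Aq a l m s * Aq a (l + m) 0 s
      + Gam a 0 s * (Aq a m n s - Aq a (m + l) (n + l) s + Aq a n l s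
                     - Aq a (n + m) (l + m) s + Aq a l m s - Aq a (l + n) (m + n) s)
     = 0)%C).
Proof.
  split; [| split].
  - intros m n s.
    exact (increment_cocycle (fun p => Gam a p s) m 0 n).
  - intros m s.
    rewrite Aq_shift, Z.add_0_l, Z.add_opp_diag_l.
    reflexivity.
  - intros l m n s.
    exact (increment_hexagon (fun p => Gam a p s) l m n).
Qed.
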